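(* For real parameters $\alpha,\delta$ define $C:[0,1]^2\to\mathbb{R}$ by $$C(u,v;\delta,\alpha)=uv+\delta\left(1-e^{\alpha(u-u^2)}\right)\left(1-e^{\alpha(v-v^2)}\right).$$ Let $$\delta^{\star}(\alpha)=\begin{cases}\dfrac{1}{\alpha^2}, & \alpha\in(-\infty,2]\setminus\{0\},\\[2mm] \dfrac{1}{2\alpha}\exp\left\{1-\dfrac{\alpha}{2}\right\}, & \alpha>2.\end{cases}$$ Then: (i) if $\alpha=0$, then for every $\delta\in\mathbb{R}$, $C(\cdot,\cdot;\delta,0)$ is the product copula $C(u,v)=uv$; (ii) if $\alpha\neq 0$ and $|\delta|\le\delta^{\star}(\alpha)$, then $C(\cdot,\cdot;\delta,\alpha)$ is a bivariate copula, i.e. $C(u,0)=C(0,v)=0$, $C(u,1)=u$, $C(1,v)=v$ for all $u,v\in[0,1]$, and $C(u_2,v_2)-C(u_1,v_2)-C(u_2,v_1)+C(u_1,v_1)\ge 0$ for all $0\le u_1<u_2\le1$, $0\le v_1<v_2\le 1$. Its density is $$c(u,v)=\frac{\partial^2 C}{\partial u\,\partial v}=1+\alpha^2\delta(1-2u)(1-2v)\exp\{\alpha(u-u^2+v-v^2)\}\ge 0\quad\text{on }[0,1]^2.$$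
   Context: A bivariate copula is a function $C:[0,1]^2\to[0,1]$ satisfying the stated boundary conditions and the 2-increasing property. *)

From Stdlib Require Import Reals Lra.
From Coquelicot Require Import Coquelicot.
Open Scope R_scope.

Definition Cfam (delta alpha : R) (u v : R) : R :=
  u * v + delta * (1 - exp (alpha * (u - u ^ 2))) * (1 - exp (alpha * (v - v ^ 2))).

Definition cdens (delta alpha : R) (u v : R) : R :=
  1 + alpha ^ 2 * delta * (1 - 2 * u) * (1 - 2 * v)
      * exp (alpha * (u - u ^ 2 + v - v ^ 2)).

(* delta^*(alpha) (only used for alpha <> 0). *)
Definition delta_star (alpha : R) : R :=
  if Rle_dec alpha 2 then 1 / alpha ^ 2
  else 1 / (2 * alpha) * exp (1 - alpha / 2).

Definition is_copula (C : R -> R -> R) : Prop :=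
  (forall u, 0 <= u <= 1 -> C u 0 = 0 /\ C 0 u = 0 /\ C u 1 = u /\ C 1 u = u) /\
  (forall u1 u2 v1 v2, 0 <= u1 -> u1 < u2 -> u2 <= 1 -> 0 <= v1 -> v1 < v2 -> v2 <= 1 ->
     C u2 v2 - C u1 v2 - C u2 v1 + C u1 v1 >= 0).

(** Write [C(u,v) = u v + delta phi(u) phi(v)] with [phi(u) = 1 - exp(alpha (u - u^2))],
    so that [phi' = - alpha chi] with [chi(u) = (1 - 2u) exp(alpha (u - u^2))] and the
    density is [1 + alpha^2 delta chi(u) chi(v)].  By the mean value theorem in each
    variable, the C-volume of a rectangle is its area times the density at an interior
    point, so C is a copula as soon as the density is nonnegative.  Putting
    [s = (1 - 2u)^2] gives [chi(u)^2 = s exp(alpha (1 - s) / 2)], and the choice of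
    [delta^*] is exactly what makes [alpha^2 delta^* chi(u)^2 <= 1] reduce to
    [x exp(1 - x) <= 1]; the bound for [chi(u) chi(v)] follows by AM-GM. *)
From Stdlib Require Import Reals Lra Psatz.
From Coquelicot Require Import Coquelicot.
Open Scope R_scope.

Definition phi (alpha u : R) : R := 1 - exp (alpha * (u - u ^ 2)).
Definition chi (alpha u : R) : R := (1 - 2 * u) * exp (alpha * (u - u ^ 2)).

Lemma Cfam_phi delta alpha u v :
  Cfam delta alpha u v = u * v + delta * phi alpha u * phi alpha v.
Proof. reflexivity. Qed.

Lemma cdens_chi delta alpha u v :
  cdens delta alpha u v = 1 + alpha ^ 2 * delta * chi alpha u * chi alpha v.
Proof.
  unfold cdens, chi.
  replace (alpha * (u - u ^ 2 + v - v ^ 2))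
    with (alpha * (u - u ^ 2) + alpha * (v - v ^ 2)) by ring.
  rewrite exp_plus; ring.
Qed.

Lemma phi_alpha0 u : phi 0 u = 0.
Proof. unfold phi; rewrite Rmult_0_l, exp_0; ring. Qed.

Lemma phi_0 alpha : phi alpha 0 = 0.
Proof. unfold phi; replace (0 - 0 ^ 2) with 0 by ring; rewrite Rmult_0_r, exp_0; ring. Qed.

Lemma phi_1 alpha : phi alpha 1 = 0.
Proof. unfold phi; replace (1 - 1 ^ 2) with 0 by ring; rewrite Rmult_0_r, exp_0; ring. Qed.

Lemma is_derive_phi alpha u : is_derive (phi alpha) u (- alpha * chi alpha u).
Proof.
  unfold phi, chi; auto_derive; auto.
  replace (alpha * (u + - (u * (u * 1)))) with (alpha * (u - u ^ 2)) by ring; ring.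
Qed.

Lemma Cfam_boundary delta alpha u :
  Cfam delta alpha u 0 = 0 /\ Cfam delta alpha 0 u = 0 /\
  Cfam delta alpha u 1 = u /\ Cfam delta alpha 1 u = u.
Proof. rewrite !Cfam_phi, phi_0, phi_1; repeat split; ring. Qed.

Lemma Cfam_volume_mvt delta alpha u1 u2 v1 v2 : u1 < u2 -> v1 < v2 ->
  exists c d, u1 < c < u2 /\ v1 < d < v2 /\
    Cfam delta alpha u2 v2 - Cfam delta alpha u1 v2
      - Cfam delta alpha u2 v1 + Cfam delta alpha u1 v1
    = (u2 - u1) * (v2 - v1) * cdens delta alpha c d.
Proof.
  intros Hu Hv.
  assert (Dphi : forall c, derivable_pt_lim (phi alpha) c (- alpha * chi alpha c))
    by (intro c; apply is_derive_Reals, is_derive_phi).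
  destruct (MVT_cor2 _ _ u1 u2 Hu (fun c _ => Dphi c)) as [c [Ec Hc]].
  destruct (MVT_cor2 _ _ v1 v2 Hv (fun d _ => Dphi d)) as [d [Ed Hd]].
  exists c, d; split; [exact Hc | split; [exact Hd |]].
  rewrite !Cfam_phi, cdens_chi.
  transitivity ((u2 - u1) * (v2 - v1)
    + delta * (phi alpha u2 - phi alpha u1) * (phi alpha v2 - phi alpha v1)); [ring |].
  rewrite Ec, Ed; ring.
Qed.

Lemma is_copula_Cfam delta alpha :
  (forall u v, 0 <= u <= 1 -> 0 <= v <= 1 -> 0 <= cdens delta alpha u v) ->
  is_copula (Cfam delta alpha).
Proof.
  intros Hc; split; [intros u _; apply Cfam_boundary |].
  intros u1 u2 v1 v2 Hu1 Hu Hu2 Hv1 Hv Hv2.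
  destruct (Cfam_volume_mvt delta alpha u1 u2 v1 v2 Hu Hv) as [c [d [Hcd [Hdd ->]]]].
  apply Rle_ge, Rmult_le_pos; [nra | apply Hc; lra].
Qed.

Lemma mul_exp_one_minus_le_1 x : x * exp (1 - x) <= 1.
Proof.
  assert (Hx := exp_ineq1_le (x - 1)).
  assert (Hinv : exp (x - 1) * exp (1 - x) = 1)
    by (rewrite <- exp_plus, <- exp_0; f_equal; ring).
  assert (0 < exp (1 - x)) by apply exp_pos.
  nra.
Qed.

Lemma sqr_chi alpha u :
  chi alpha u ^ 2 = (1 - 2 * u) ^ 2 * exp (alpha * (1 - (1 - 2 * u) ^ 2) / 2).
Proof.
  unfold chi.
  replace (alpha * (1 - (1 - 2 * u) ^ 2) / 2)
    with (alpha * (u - u ^ 2) + alpha * (u - u ^ 2)) by field.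
  rewrite exp_plus; ring.
Qed.

Lemma delta_star_weight_le_1 alpha s : alpha <> 0 -> 0 <= s <= 1 ->
  alpha ^ 2 * delta_star alpha * (s * exp (alpha * (1 - s) / 2)) <= 1.
Proof.
  intros Ha Hs.
  assert (0 < exp (alpha * (1 - s) / 2)) by apply exp_pos.
  unfold delta_star; destruct (Rle_dec alpha 2) as [Hle | Hgt].
  - replace (alpha ^ 2 * (1 / alpha ^ 2)) with 1 by (field; exact Ha).
    assert (exp (alpha * (1 - s) / 2) <= exp (1 - s))
      by (apply Rnot_lt_le; intro Hlt; apply exp_lt_inv in Hlt; nra).
    pose proof (mul_exp_one_minus_le_1 s).
    nra.
  - (* [exp (1 - alpha/2) * exp (alpha (1 - s)/2) = exp (1 - alpha s / 2)] *)
    replace (alpha ^ 2 * (1 / (2 * alpha) * exp (1 - alpha / 2))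
               * (s * exp (alpha * (1 - s) / 2)))
      with (alpha * s / 2 * exp (1 - alpha * s / 2)).
    + apply mul_exp_one_minus_le_1.
    + replace (1 - alpha * s / 2) with (1 - alpha / 2 + alpha * (1 - s) / 2) by field.
      rewrite exp_plus; field; exact Ha.
Qed.

Lemma sqr_chi_le_delta_star alpha delta u :
  alpha <> 0 -> Rabs delta <= delta_star alpha -> 0 <= u <= 1 ->
  alpha ^ 2 * Rabs delta * chi alpha u ^ 2 <= 1.
Proof.
  intros Ha Hd Hu.
  assert (Hs : 0 <= (1 - 2 * u) ^ 2 <= 1) 
    by (split; [apply pow2_ge_0 | simpl; nra]).
  pose proof (delta_star_weight_le_1 alpha _ Ha Hs) as Hstar.
  rewrite <- sqr_chi in Hstar.
  eapply Rle_trans; [| exact Hstar].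
  apply Rmult_le_compat_r; [apply pow2_ge_0 |].
  apply Rmult_le_compat_l; [apply pow2_ge_0 | exact Hd].
Qed.

Lemma Rabs_mult_le_1_of_sqr A a b : 0 <= A -> A * a ^ 2 <= 1 -> A * b ^ 2 <= 1 ->
  A * Rabs (a * b) <= 1.
Proof.
  intros HA Ha Hb.
  assert (AMGM : 2 * Rabs (a * b) <= a ^ 2 + b ^ 2).
  { rewrite Rabs_mult, <- (pow2_abs a), <- (pow2_abs b).
    pose proof (pow2_ge_0 (Rabs a - Rabs b)); nra. }
  nra.
Qed.

Lemma cdens_nonneg alpha delta u v :
  alpha <> 0 -> Rabs delta <= delta_star alpha -> 0 <= u <= 1 -> 0 <= v <= 1 ->
  0 <= cdens delta alpha u v.
Proof.
  intros Ha Hd Hu Hv.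
  assert (Hb : alpha ^ 2 * Rabs delta * Rabs (chi alpha u * chi alpha v) <= 1)
    by (apply Rabs_mult_le_1_of_sqr; [pose proof (Rabs_pos delta); nra
        | apply sqr_chi_le_delta_star | apply sqr_chi_le_delta_star]; assumption).
  assert (Habs : Rabs (alpha ^ 2 * delta * (chi alpha u * chi alpha v)) <= 1).
  { rewrite !Rabs_mult, (Rabs_right (alpha ^ 2)) by (apply Rle_ge, pow2_ge_0).
    rewrite <- Rabs_mult; exact Hb. }
  apply Rabs_le_between in Habs.
  rewrite cdens_chi; lra.
Qed.

Lemma is_derive_affine_phi alpha a b x :
  is_derive (fun y => a * y + b * phi alpha y) x (a - alpha * b * chi alpha x).
Proof.
  unfold phi, chi; auto_derive; auto.
  replace (alpha * (x + - (x * (x * 1)))) with (alpha * (x - x ^ 2)) by ring; ring.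
Qed.

Lemma Derive_Cfam_r delta alpha u v :
  Derive (fun y => Cfam delta alpha u y) v = u - alpha * (delta * phi alpha u) * chi alpha v.
Proof.
  apply is_derive_unique.
  apply (is_derive_ext (fun y => u * y + delta * phi alpha u * phi alpha y));
    [intro y; symmetry; apply Cfam_phi |].
  apply is_derive_affine_phi.
Qed.

Lemma is_derive_Derive_Cfam delta alpha u v :
  is_derive (fun x => Derive (fun y => Cfam delta alpha x y) v) u (cdens delta alpha u v).
Proof.
  assert (Hext : forall x, 1 * x + (- alpha * delta * chi alpha v) * phi alpha x
                          = Derive (fun y => Cfam delta alpha x y) v)
    by (intro x; rewrite Derive_Cfam_r; ring).
  eapply is_derive_ext; [exact Hext |].
  replace (cdens delta alpha u v)
    with (1 - alpha * (- alpha * delta * chi alpha v) * chi alpha u)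
    by (rewrite cdens_chi; ring).
  apply is_derive_affine_phi.
Qed.

Theorem mainTheorem1 :
  (forall delta : R,
     (forall u v, 0 <= u <= 1 -> 0 <= v <= 1 -> Cfam delta 0 u v = u * v) /\
     is_copula (Cfam delta 0)) /\
  (forall alpha delta : R, alpha <> 0 -> Rabs delta <= delta_star alpha ->
     is_copula (Cfam delta alpha) /\
     (forall u v, 0 <= u <= 1 -> 0 <= v <= 1 ->
        is_derive (fun x => Derive (fun y => Cfam delta alpha x y) v) u
                  (cdens delta alpha u v)) /\
     (forall u v, 0 <= u <= 1 -> 0 <= v <= 1 -> cdens delta alpha u v >= 0)).
Proof.
  split.
  - intro delta; split.
    + intros u v _ _; rewrite Cfam_phi, !phi_alpha0; ring.
    + apply is_copula_Cfam; intros u v _ _; rewrite cdens_chi; nra.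
  - intros alpha delta Ha Hd; split; [| split].
    + apply is_copula_Cfam; intros u v Hu Hv; now apply cdens_nonneg.
    + intros u v _ _; apply is_derive_Derive_Cfam.
    + intros u v Hu Hv; now apply Rle_ge, cdens_nonneg.
Qed.
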